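(* Let $E=(E,q)$ be a formed space. (1) For any $W\in\mathcal{P}^\omega(E)$, the map $G(E)_W\to\operatorname{GL}(W)_{R(E)}\times G(W^\perp/W)$ sending $f$ to its restriction to $W$ and its induced map on $W^\perp/W$ is split surjective. (2) For any $U\in\mathcal{P}^\omega(E)$ and $W\in\mathcal{P}^\omega(E,U)$, the analogous map $A(E,U)_W\to A^T(W,W\cap U^\perp)_{\mathrm{id}_{R(E)}}\times G(W^\perp/W)$ is split surjective.
   Context: Formed spaces over a field with involution $\sigma$ ($\bar c=\sigma(c)$), $\varepsilon$ ($\varepsilon\bar\varepsilon=1$), $\Lambda$ ($\{c-\varepsilon\bar c\}\le\Lambda\le\{c:c+\varepsilon\bar c=0\}$): a form on finite-dimensional $E$ is a sesquilinear map modulo those $f$ with $f(v,v)\in\Lambda$, $f(w,v)=-\varepsilon\overline{f(v,w)}$; $\omega_q(v,w)=q(v,w)+\varepsilon\overline{q(w,v)}$, $Q_q(v)=q(v,v)+\Lambda$; radical $R(E)=\{v:\omega_q(E,v)=0,Q_q(v)=0\}$; $U^\perp=\{v:\omega_q(v,U)=0\}$; isotropic means $\omega_q,Q_q$ vanish. $\mathcal{P}^\omega(E)$: isotropic $W$ with $R(E)<W<E$; $\mathcal{P}^\omega(E,U)$: those also satisfying $W+U^\perp=E$. For $W$ isotropic, $W^\perp/W$ carries the unique form making $W^\perp\to W^\perp/W$ an isometry. $G(E)$ is the group of bijective isometries, $G(E)_W$ its stabilizer of $W$; $A(E,U)$ the subgroup fixing $U$ pointwise, $A(E,U)_W$ its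 stabilizer of $W$. $\operatorname{GL}(W)_{R(E)}$ is the subgroup of $\operatorname{GL}(W)$ preserving $R(E)$; $A^T(W,W_0)=\{g\in\operatorname{GL}(W):g(w)-w\in W_0\ \forall w\}$, and the subscript $\mathrm{id}_{R(E)}$ denotes the subgroup restricting to the identity on $R(E)$. *)

From HB Require Import structures.
From mathcomp Require Import all_boot all_order all_algebra.
Set Implicit Arguments. Unset Strict Implicit. Unset Printing Implicit Defensive.
Import GRing.Theory.
Local Open Scope ring_scope.

Section FormedSpaces.
Variable K : fieldType.
Variable sigma : K -> K.
Variable eps : K.
Variable Lam : {pred K}.

(* (sigma, eps, Lam) form parameter: sigma an involutive field automorphism
   (ring morphism is required separately via the type {rmorphism K -> K}),
   eps * \bar eps = 1, Lam an additive subgroup with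
   {c - eps \bar c} <= Lam <= {c | c + eps \bar c = 0}, closed under
   l |-> a l \bar a (standard form-parameter axiom). *)
Definition form_param : Prop :=
  [/\ involutive sigma /\ eps * sigma eps = 1,
      (0 \in Lam) /\ (forall x y, x \in Lam -> y \in Lam -> x - y \in Lam),
      (forall a l, l \in Lam -> a * l * sigma a \in Lam),
      (forall c, c - eps * sigma c \in Lam) &
      (forall c, c \in Lam -> c + eps * sigma c = 0)].

Variable E : vectType K.

Definition sesq (q : E -> E -> K) : Prop :=
  (forall w a v1 v2, q (a *: v1 + v2) w = a * q v1 w + q v2 w) /\
  (forall v a w1 w2, q v (a *: w1 + w2) = q v w1 * sigma a + q v w2).

(* f is a "null" sesquilinear map on the subset D (i.e. represents the zero
   form there): f(v,v) \in Lam and f(w,v) = - eps \bar{f(v,w)}. *)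
Definition nullform (D : E -> Prop) (f : E -> E -> K) : Prop :=
  (forall v w, D v -> D w -> f w v = - (eps * sigma (f v w))) /\
  (forall v, D v -> f v v \in Lam).

Definition omega (q : E -> E -> K) (v w : E) : K := q v w + eps * sigma (q w v).

(* Q_q(v) = 0 in K/Lam  iff  q(v,v) \in Lam *)
Definition radical (q : E -> E -> K) (v : E) : Prop :=
  (forall u, omega q u v = 0) /\ q v v \in Lam.

Definition orthv (q : E -> E -> K) (U : {vspace E}) : {vspace E} :=
  (\bigcap_(i < \dim U)
     lker (linfun (fun v : E => (omega q v (tnth (vbasis U) i) : K^o))))%VS.

Definition isotropic (q : E -> E -> K) (W : {vspace E}) : Prop :=
  (forall v w, v \in W -> w \in W -> omega q v w = 0) /\
  (forall v, v \in W -> q v v \in Lam).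

Definition Pomega (q : E -> E -> K) (W : {vspace E}) : Prop :=
  [/\ isotropic q W,
      (forall v, radical q v -> v \in W),
      (exists2 w, w \in W & ~ radical q w) &
      (exists v, v \notin W)].

Definition PomegaU (q : E -> E -> K) (U W : {vspace E}) : Prop :=
  Pomega q W /\ (W + orthv q U = fullv)%VS.

(* G(E): bijective isometries (f^* q = q as forms) *)
Definition isomE (q : E -> E -> K) (f : 'End(E)) : Prop :=
  bijective f /\ nullform (fun _ => True) (fun v w => q (f v) (f w) - q v w).

Definition GLR (q : E -> E -> K) (W : {vspace E}) (g : 'End(subvs_of W)) : Prop :=
  bijective g /\ (forall w, radical q (vsval w) <-> radical q (vsval (g w))).

Definition ATid (q : E -> E -> K) (W W0 : {vspace E}) (g : 'End(subvs_of W)) : Prop :=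
  [/\ bijective g, (forall w, vsval (g w) - vsval w \in W0) &
      (forall w, radical q (vsval w) -> g w = w)].

End FormedSpaces.

(* (F, qF, pi) is a model of the quotient formed space W^perp/W: pi restricted
   to W^perp is onto F with kernel W, and is an isometry (pi^* qF = q on W^perp). *)
Definition is_quotient (K : fieldType) (sigma : K -> K) (eps : K) (Lam : {pred K})
    (E : vectType K) (q : E -> E -> K) (W : {vspace E})
    (F : vectType K) (qF : F -> F -> K) (pi : 'Hom(E, F)) : Prop :=
  [/\ sesq sigma qF,
      (pi @: orthv sigma eps q W = fullv)%VS,
      (orthv sigma eps q W :&: lker pi = W)%VS &
      nullform sigma eps Lam (fun v => v \in orthv sigma eps q W)
        (fun v w => qF (pi v) (pi w) - q v w)].

(* s is a homomorphic section of  f |-> (f|_W, induced map on W^perp/W),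
   from the group HE <= G(E) onto HW x G(W^perp/W). *)
Definition split_section (K : fieldType) (sigma : K -> K) (eps : K) (Lam : {pred K})
    (E : vectType K) (q : E -> E -> K) (W : {vspace E})
    (F : vectType K) (qF : F -> F -> K) (pi : 'Hom(E, F))
    (HE : 'End(E) -> Prop) (HW : 'End(subvs_of W) -> Prop)
    (s : 'End(subvs_of W) * 'End(F) -> 'End(E)) : Prop :=
  (forall g h, HW g -> isomE sigma eps Lam qF h ->
     [/\ HE (s (g, h)),
         (forall w : subvs_of W, s (g, h) (vsval w) = vsval (g w)) &
         (forall v, v \in orthv sigma eps q W -> pi (s (g, h) v) = h (pi v))]) /\
  (forall g1 h1 g2 h2, HW g1 -> isomE sigma eps Lam qF h1 ->
     HW g2 -> isomE sigma eps Lam qF h2 ->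
     s ((g1 \o g2)%VF, (h1 \o h2)%VF) = (s (g1, h1) \o s (g2, h2))%VF).

(* Pick w_i spanning W modulo the radical R(E), an isotropic family d_j with
   omega(d_j, w_i) = delta_ij, and a linear section T of W^perp -> W^perp/W orthogonal to
   the d_j; then E = W + T(W^perp/W) + span(d). The lift of (g, h) acts as g on W, as
   T h T^-1 on T(W^perp/W), and contragrediently to g on span(d). The three pieces pair only
   as W with span(d) and T(W^perp/W) with itself, so the lift is an isometry, and the
   construction is visibly multiplicative. For (2) the d_j are chosen so that U lies in
   R(E) + span(d): the first d_j form a basis of U modulo R(E) and the first w_i are dual to
   them. As g fixes R(E) and moves W only inside U^perp, the lift then fixes U. *)

From HB Require Import structures.
From mathcomp Require Import all_boot all_order all_algebra.
From mathcomp Require Import ring.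
Set Implicit Arguments. Unset Strict Implicit. Unset Printing Implicit Defensive.
Import GRing.Theory.
Local Open Scope ring_scope.

Lemma linfun_linearE (K : fieldType) (aT rT : vectType K) (f : aT -> rT) :
  linear f -> linfun f =1 f.
Proof.
move=> lin_f; pose F : {linear aT -> rT} := HB.pack f (GRing.isLinear.Build _ _ _ _ f lin_f).
exact: (lfunE F).
Qed.

Lemma bij_lker0 (K : fieldType) (V : vectType K) (f : 'End(V)) :
  bijective f -> lker f == 0%VS.
Proof. by move/bij_inj/lker0P. Qed.

Lemma lker0_invM (K : fieldType) (V : vectType K) (f g : 'End(V)) :
  lker f == 0%VS -> lker g == 0%VS -> ((f \o g)^-1 = g^-1 \o f^-1)%VF.
Proof.
move=> kf kg; have kfg : lker (f \o g)%VF == 0%VS.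
  by apply/lker0P => x y; rewrite !comp_lfunE => /(lker0P kf)/(lker0P kg).
apply/lfunP => x; apply: (lker0P kfg).
by rewrite lker0_lfunVK // !comp_lfunE !lker0_lfunVK.
Qed.

Lemma sum_mulrb_eq (V : nmodType) n (l : 'I_n) (F : 'I_n -> V) :
  \sum_(i < n) F i *+ (i == l) = F l.
Proof. by rewrite (bigD1 l) //= eqxx mulr1n big1 ?addr0 // => i /negbTE ->. Qed.

Definition catf (T : Type) m n (f : 'I_m -> T) (g : 'I_n -> T) (i : 'I_(m + n)) : T :=
  match fintype.split i with inl a => f a | inr b => g b end.

Lemma catf_l T m n (f : 'I_m -> T) (g : 'I_n -> T) a : catf f g (lshift n a) = f a.
Proof. by rewrite /catf (unsplitK (inl _ a)). Qed.

Lemma catf_r T m n (f : 'I_m -> T) (g : 'I_n -> T) b : catf f g (rshift m b) = g b.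
Proof. by rewrite /catf (unsplitK (inr _ b)). Qed.

Lemma sum_catf (R : pzRingType) (V : lmodType R) m n (c1 : 'I_m -> R) (c2 : 'I_n -> R)
    (f : 'I_m -> V) (g : 'I_n -> V) :
  \sum_i catf c1 c2 i *: catf f g i = \sum_a c1 a *: f a + \sum_b c2 b *: g b.
Proof. by rewrite big_split_ord; congr (_ + _); apply: eq_bigr => i _; rewrite ?catf_l ?catf_r. Qed.

Section FormParameter.
Variables (K : fieldType) (sigma : {rmorphism K -> K}) (eps : K) (Lam : {pred K}).
Hypothesis fp : form_param sigma eps Lam.

Lemma sigmaK : involutive sigma. Proof. by case: fp => -[]. Qed.
Lemma eps_sigma : eps * sigma eps = 1. Proof. by case: fp => -[]. Qed.
Lemma sigma_eps : sigma eps * eps = 1. Proof. by rewrite mulrC eps_sigma. Qed.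
Lemma Lam0 : 0 \in Lam. Proof. by case: fp => _ []. Qed.
Lemma LamB x y : x \in Lam -> y \in Lam -> x - y \in Lam.
Proof. by case: fp => _ [_ LamB] _ _ _; apply: LamB. Qed.
Lemma LamN y : y \in Lam -> - y \in Lam.
Proof. by rewrite -sub0r; apply: LamB Lam0. Qed.
Lemma LamD x y : x \in Lam -> y \in Lam -> x + y \in Lam.
Proof. by move=> Lx Ly; rewrite -[y]opprK; apply/LamB/LamN. Qed.
Lemma Lam_conj a l : l \in Lam -> a * l * sigma a \in Lam.
Proof. by case: fp => _ _ Lam_conj _ _; apply: Lam_conj. Qed.
Lemma Lam_min c : c - eps * sigma c \in Lam.
Proof. by case: fp => _ _ _ Lam_min _; apply: Lam_min. Qed.
Lemma Lam_max c : c \in Lam -> c + eps * sigma c = 0.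
Proof. by case: fp => _ _ _ _ Lam_max; apply: Lam_max. Qed.

Section AnyForm.
Variables (V : vectType K) (p p' : V -> V -> K).

Lemma nullform_omega (P : V -> Prop) v w :
  nullform sigma eps Lam P (fun v w => p' v w - p v w) -> P v -> P w ->
  omega sigma eps p' w v = omega sigma eps p w v.
Proof.
move=> [skew _] Pv Pw; have {}skew := skew v w Pv Pw.
rewrite /omega (_ : p' w v = p w v - eps * sigma (p' v w - p v w)).
  by rewrite rmorphB; ring.
by rewrite -skew; ring.
Qed.

Lemma nullform_of_omega (f : 'End(V)) :
  (forall u v, omega sigma eps p (f u) (f v) = omega sigma eps p u v) ->
  (forall v, p (f v) (f v) - p v v \in Lam) ->
  nullform sigma eps Lam (fun _ => True) (fun v w => p (f v) (f w) - p v w).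
Proof.
move=> f_omega f_Q; split=> [v w _ _|v _]; last exact: f_Q.
have := f_omega w v; rewrite /omega => fwv.
have -> : p (f w) (f v) = p w v + eps * sigma (p v w) - eps * sigma (p (f v) (f w)).
  by rewrite -fwv; ring.
by rewrite rmorphB; ring.
Qed.

End AnyForm.

Variables (E : vectType K) (q : E -> E -> K).
Hypothesis sesq_q : sesq sigma q.

Local Notation om := (omega sigma eps q).
Local Notation rad := (radical sigma eps Lam q).
Local Notation perp := (orthv sigma eps q).

Lemma q0l w : q 0 w = 0.
Proof.
have := sesq_q.1 w 1 0 0; rewrite scale1r add0r mul1r => q00.
by apply: (addrI (q 0 w)); rewrite addr0 -q00.
Qed.
Lemma qDl v1 v2 w : q (v1 + v2) w = q v1 w + q v2 w.
Proof. by have := sesq_q.1 w 1 v1 v2; rewrite scale1r mul1r. Qed.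
Lemma qZl a v w : q (a *: v) w = a * q v w.
Proof. by have := sesq_q.1 w a v 0; rewrite addr0 q0l addr0. Qed.
Lemma q0r v : q v 0 = 0.
Proof.
have := sesq_q.2 v 1 0 0; rewrite scale1r add0r rmorph1 mulr1 => q00.
by apply: (addrI (q v 0)); rewrite addr0 -q00.
Qed.
Lemma qDr v w1 w2 : q v (w1 + w2) = q v w1 + q v w2.
Proof. by have := sesq_q.2 v 1 w1 w2; rewrite scale1r rmorph1 mulr1. Qed.
Lemma qZr a v w : q v (a *: w) = q v w * sigma a.
Proof. by have := sesq_q.2 v a w 0; rewrite addr0 q0r addr0. Qed.

Lemma omega0l w : om 0 w = 0.
Proof. by rewrite /omega q0l q0r rmorph0 mulr0 addr0. Qed.
Lemma omegaDl v1 v2 w : om (v1 + v2) w = om v1 w + om v2 w.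
Proof. by rewrite /omega qDl qDr rmorphD mulrDr addrACA. Qed.
Lemma omegaZl a v w : om (a *: v) w = a * om v w.
Proof. by rewrite /omega qZl qZr rmorphM sigmaK; ring. Qed.
Lemma omegaNl v w : om (- v) w = - om v w.
Proof. by rewrite -scaleN1r omegaZl mulN1r. Qed.
Lemma omegaBl v1 v2 w : om (v1 - v2) w = om v1 w - om v2 w.
Proof. by rewrite omegaDl omegaNl. Qed.
Lemma omega0r v : om v 0 = 0.
Proof. by rewrite /omega q0l q0r rmorph0 mulr0 addr0. Qed.
Lemma omegaDr v w1 w2 : om v (w1 + w2) = om v w1 + om v w2.
Proof. by rewrite /omega qDl qDr rmorphD mulrDr addrACA. Qed.
Lemma omegaZr a v w : om v (a *: w) = om v w * sigma a.
Proof. by rewrite /omega qZl qZr rmorphM; ring. Qed.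
Lemma omega_suml I (r : seq I) (P : pred I) (F : I -> E) w :
  om (\sum_(i <- r | P i) F i) w = \sum_(i <- r | P i) om (F i) w.
Proof. by elim/big_rec2: _ => [|i y x _ <-]; rewrite ?omega0l ?omegaDl. Qed.
Lemma omega_sumr I (r : seq I) (P : pred I) (F : I -> E) v :
  om v (\sum_(i <- r | P i) F i) = \sum_(i <- r | P i) om v (F i).
Proof. by elim/big_rec2: _ => [|i y x _ <-]; rewrite ?omega0r ?omegaDr. Qed.

Lemma omega_sym v w : om v w = eps * sigma (om w v).
Proof. by rewrite /omega rmorphD rmorphM sigmaK mulrDr mulrA eps_sigma mul1r addrC. Qed.
Lemma omega_eq0_sym v w : om v w = 0 -> om w v = 0.
Proof. by move=> vw0; rewrite omega_sym vw0 rmorph0 mulr0. Qed.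

Lemma Q_addE u v : q (u + v) (u + v) - (q u u + q v v + om v u) \in Lam.
Proof.
rewrite (_ : _ - _ = q u v - eps * sigma (q u v)) ?Lam_min //.
by rewrite qDl !qDr /omega; ring.
Qed.

Lemma Q_add_Lam u v : q u u \in Lam -> q v v \in Lam -> om v u = 0 -> q (u + v) (u + v) \in Lam.
Proof.
move=> Qu Qv vu0; have := LamD (Q_addE u v) (LamD Qu Qv).
by rewrite vu0 addr0 subrK.
Qed.

Lemma omega_diag_eq0 v : q v v \in Lam -> om v v = 0.
Proof. by move=> Qv; rewrite /omega Lam_max. Qed.

Lemma orthvP (U : {vspace E}) v : v \in perp U <-> (forall u, u \in U -> om v u = 0).
Proof.
have om_lin w : linear (fun v : E => (om v w : K^o)) by move=> a x y; rewrite omegaDl omegaZl.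
rewrite /orthv memvE; split.
  move/subv_bigcapP => v_ker u Uu; rewrite (coord_vbasis Uu) omega_sumr big1 // => i _.
  have := v_ker i isT; rewrite -memvE memv_ker linfun_linearE //=.
  by rewrite omegaZr (tnth_nth 0) => /eqP ->; rewrite mul0r.
move=> v_perp; apply/subv_bigcapP => i _; rewrite -memvE memv_ker linfun_linearE //=.
by rewrite v_perp // vbasis_mem // mem_tnth.
Qed.

Lemma isotropic_perp (W : {vspace E}) x : isotropic sigma eps Lam q W -> x \in W -> x \in perp W.
Proof. by move=> isoW Wx; apply/orthvP => u Wu; apply: isoW.1. Qed.

Lemma isotropicS (X Y : {vspace E}) :
  (X <= Y)%VS -> isotropic sigma eps Lam q Y -> isotropic sigma eps Lam q X.
Proof.
move=> /subvP XY [isoY1 isoY2].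
by split=> [x y /XY Yx /XY Yy | x /XY Yx]; [exact: isoY1 | exact: isoY2].
Qed.

Lemma exists_omega_dual k (z : 'I_k -> E) :
  (forall c : 'I_k -> K, (forall v, om v (\sum_i c i *: z i) = 0) -> forall i, c i = 0) ->
  forall t : 'I_k -> K, exists e, forall i, om e (z i) = t i.
Proof.
move=> z_free t; pose b := vbasis (fullv : {vspace E}).
pose A : 'M[K]_(\dim {: E}, k) := \matrix_(a, i) om b`_a (z i).
have A_full : row_full A.
  rewrite -col_leq_rank -mxrank_tr row_leq_rank -kermx_eq0.
  apply/rowV0P => c /sub_kermxP cA0; apply/rowP => i; rewrite mxE.
  rewrite -[c 0 i]sigmaK (z_free (fun i => sigma (c 0 i))) ?rmorph0 // => x.
  rewrite (coord_vbasis (memvf x)) omega_suml big1 // => a _.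
  rewrite omegaZl omega_sumr -[X in _ * X](_ : \sum_j c 0 j * A^T j a = _).
    by have := congr1 (fun M : 'M_(1, _) => M 0 a) cA0; rewrite !mxE => ->; rewrite mulr0.
  by apply: eq_bigr => j _; rewrite omegaZr sigmaK !mxE mulrC.
have /submxP [D tDA] : (\row_i t i <= A)%MS by apply: submx_full.
exists (\sum_a D 0 a *: b`_a) => i; rewrite omega_suml.
have := congr1 (fun M : 'M_(1, k) => M 0 i) tDA; rewrite !mxE => ->.
by apply: eq_bigr => a _; rewrite omegaZl mxE.
Qed.

Lemma Q_add_congr x y x' y' : q x' x' - q x x \in Lam -> q y' y' - q y y \in Lam ->
  om y' x' = om y x -> q (x' + y') (x' + y') - q (x + y) (x + y) \in Lam.
Proof.
move=> Qx Qy yx; have := LamD (LamD (LamB (Q_addE x' y') (Q_addE x y)) Qx) Qy.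
by rewrite yx; congr (_ \in Lam); ring.
Qed.

Lemma isotropic_span k (z : 'I_k -> E) : (forall i j, om (z i) (z j) = 0) ->
  (forall i, q (z i) (z i) \in Lam) -> isotropic sigma eps Lam q (\sum_(i < k) <[z i]>)%VS.
Proof.
move=> z_omega z_Q; set S := (\sum_i <[z i]>)%VS.
have omega_span x y : x \in S -> y \in S -> om x y = 0.
  move=> /memv_sumP [xs xs_z ->] /memv_sumP [ys ys_z ->].
  rewrite omega_suml big1 // => i _; rewrite omega_sumr big1 // => j _.
  have [/vlineP [a ->] /vlineP [b ->]] := (xs_z i isT, ys_z j isT).
  by rewrite omegaZl omegaZr z_omega mul0r mulr0.
have z_span i : z i \in S by rewrite memvE (sumv_sup i) // -memvE memv_line.
split=> // x /memv_sumP [xs xs_z ->].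
suff [] : \sum_i xs i \in S /\ q (\sum_i xs i) (\sum_i xs i) \in Lam by [].
apply: (big_ind (fun y => y \in S /\ q y y \in Lam)).
- by rewrite mem0v q0l Lam0.
- move=> y1 y2 [S1 Q1] [S2 Q2]; rewrite rpredD //; split=> //.
  by apply: Q_add_Lam => //; apply: omega_span.
- move=> i _; have /vlineP [a ->] := xs_z i isT.
  by rewrite rpredZ // qZl qZr mulrA Lam_conj.
Qed.

Definition spans_mod_rad (W : {vspace E}) k (w : 'I_k -> E) : Prop :=
  (forall i, w i \in W) /\
  (forall x, x \in W -> exists c : 'I_k -> K, rad (x - \sum_i c i *: w i)).

Definition isotropic_dual k (w d : 'I_k -> E) : Prop :=
  [/\ forall i j, om (d j) (w i) = (i == j)%:R,
      forall i j, om (d i) (d j) = 0 & forall j, q (d j) (d j) \in Lam].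

Definition orth_section (W : {vspace E}) (F : vectType K) (pi : 'Hom(E, F))
    k (d : 'I_k -> E) (T : 'Hom(F, E)) : Prop :=
  [/\ forall f, T f \in perp W, forall f, pi (T f) = f & forall f j, om (T f) (d j) = 0].

Section Lift.
Variables (W : {vspace E}) (F : vectType K) (qF : F -> F -> K) (pi : 'Hom(E, F)).
Hypothesis quotW : is_quotient sigma eps Lam q W qF pi.
Hypothesis isoW : isotropic sigma eps Lam q W.
Hypothesis radW : forall v, rad v -> v \in W.
Variables (k : nat) (w d : 'I_k -> E) (T : 'Hom(F, E)).
Hypotheses (w_span : spans_mod_rad W w) (d_dual : isotropic_dual w d).
Hypothesis T_sec : orth_section W pi d T.

Local Notation omF := (omega sigma eps qF).
Local Notation GLR := (GLR sigma eps Lam q (W := W)).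
Implicit Types (g : 'End(subvs_of W)) (h : 'End(F)).

Lemma w_in_W i : w i \in W. Proof. by case: w_span. Qed.
Lemma omega_d_w i j : om (d j) (w i) = (i == j)%:R. Proof. by case: d_dual. Qed.
Lemma omega_d_d i j : om (d i) (d j) = 0. Proof. by case: d_dual. Qed.
Lemma Q_d j : q (d j) (d j) \in Lam. Proof. by case: d_dual. Qed.
Lemma T_perp f : T f \in perp W. Proof. by case: T_sec. Qed.
Lemma piT f : pi (T f) = f. Proof. by case: T_sec. Qed.
Lemma omega_T_d f j : om (T f) (d j) = 0. Proof. by case: T_sec. Qed.

Lemma omega_T_W f x : x \in W -> om (T f) x = 0.
Proof. by move: x; apply/orthvP/T_perp. Qed.

Lemma piW x : x \in W -> pi x = 0.
Proof.
case: quotW => _ _ capW _; rewrite -capW => /memv_capP [_].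
by rewrite memv_ker => /eqP.
Qed.

Lemma perp_ker_pi x : x \in perp W -> pi x = 0 -> x \in W.
Proof. by case: quotW => _ _ capW _ Wx pix0; rewrite -capW memv_cap memv_ker Wx pix0 eqxx. Qed.

Lemma omega_d_sum j (c : 'I_k -> K) : om (d j) (\sum_i c i *: w i) = sigma (c j).
Proof.
rewrite omega_sumr; under eq_bigr do rewrite omegaZr omega_d_w mulr_natl.
exact: sum_mulrb_eq.
Qed.

Lemma W_coord x : x \in W -> rad (x - \sum_l sigma (om (d l) x) *: w l).
Proof.
move=> Wx; have [c rad_c] := w_span.2 x Wx.
suff -> : \sum_l sigma (om (d l) x) *: w l = \sum_i c i *: w i by [].
apply: eq_bigr => l _; rewrite -[x in om _ x](subrK (\sum_i c i *: w i)).
by rewrite omegaDr rad_c.1 add0r omega_d_sum sigmaK.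
Qed.

Lemma omega_W_eq0 y : (forall l, om y (w l) = 0) -> forall x, x \in W -> om y x = 0.
Proof.
move=> y_w x Wx; rewrite -[x](subrK (\sum_l sigma (om (d l) x) *: w l)) omegaDr.
rewrite (W_coord Wx).1 add0r omega_sumr big1 // => l _.
by rewrite omegaZr y_w mul0r.
Qed.

(* Coordinates of [v] in the direct sum E = W + T(F) + span(d). *)
Definition dcoord j v := om v (w j).
Definition perp_part v := v - \sum_j dcoord j v *: d j.
Definition W_part v := perp_part v - T (pi (perp_part v)).

Lemma perp_part_perp v : perp_part v \in perp W.
Proof.
apply/orthvP/omega_W_eq0 => l; rewrite omegaBl omega_suml.
under eq_bigr do rewrite omegaZl omega_d_w mulr_natr eq_sym.
by rewrite sum_mulrb_eq subrr.
Qed.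

Lemma W_part_W v : W_part v \in W.
Proof.
apply: perp_ker_pi; first by rewrite rpredB ?perp_part_perp ?T_perp.
by rewrite linearB /= piT subrr.
Qed.

Lemma decompE v : v = W_part v + T (pi (perp_part v)) + \sum_j dcoord j v *: d j.
Proof. by rewrite /W_part subrK /perp_part subrK. Qed.

Lemma dcoord_perp j v : v \in perp W -> dcoord j v = 0.
Proof. by move/orthvP; apply; apply: w_in_W. Qed.

Lemma perp_partE v : v \in perp W -> perp_part v = v.
Proof.
by move=> Wv; rewrite /perp_part big1 ?subr0 // => j _; rewrite dcoord_perp ?scale0r.
Qed.

Lemma dcoord_d i j : dcoord i (d j) = (i == j)%:R.
Proof. exact: omega_d_w. Qed.

Lemma perp_part_d j : perp_part (d j) = 0.
Proof.
rewrite /perp_part; under eq_bigr do rewrite dcoord_d scaler_nat.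
by rewrite sum_mulrb_eq subrr.
Qed.

Lemma dcoordP j a u v : dcoord j (a *: u + v) = a * dcoord j u + dcoord j v.
Proof. by rewrite /dcoord omegaDl omegaZl. Qed.

Lemma perp_partP : linear perp_part.
Proof.
move=> a u v; rewrite /perp_part.
under eq_bigr do rewrite dcoordP scalerDl -scalerA.
by rewrite big_split /= -scaler_sumr scalerBr opprD addrACA.
Qed.

Lemma W_partP : linear W_part.
Proof.
move=> a u v; rewrite /W_part perp_partP; move: (perp_part u) (perp_part v) => x y.
by rewrite !linearP /= scalerBr scalerN addrACA.
Qed.

Lemma lfun_ext (f1 f2 : 'End(E)) : {in W, f1 =1 f2} ->
  (forall a, f1 (T a) = f2 (T a)) -> (forall j, f1 (d j) = f2 (d j)) -> f1 = f2.
Proof.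
move=> eqW eqT eqd; apply/lfunP => v; rewrite (decompE v).
move: (W_part_W v); move: (W_part v) (perp_part v) => x y Wx.
rewrite !linearD !linear_sum /= eqW // eqT; congr (_ + _); apply: eq_bigr => j _.
by rewrite !linearZ /= eqd.
Qed.

Definition extW g : 'End(E) := (linfun vsval \o g \o linfun (vsproj W))%VF.

Lemma extWE g x : extW g x = vsval (g (vsproj W x)).
Proof. by rewrite !comp_lfunE !lfunE. Qed.

Lemma extW_W g x : extW g x \in W. Proof. by rewrite extWE subvsP. Qed.

Lemma extW_val g y : extW g (vsval y) = vsval (g y).
Proof. by rewrite extWE vsvalK. Qed.

Lemma extW_comp g1 g2 x : extW g1 (extW g2 x) = extW (g1 \o g2)%VF x.
Proof. by rewrite !extWE vsvalK comp_lfunE. Qed.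

(* The image of [d j] under the lift: the vector of span(d) pairing with [extW g x] as [d j]
   pairs with [x]. *)
Definition dual_image g j := \sum_l om (d j) (extW g^-1%VF (w l)) *: d l.

Definition lift_fun g h v :=
  extW g (W_part v) + T (h (pi (perp_part v))) + \sum_j dcoord j v *: dual_image g j.

Lemma lift_funP g h : linear (lift_fun g h).
Proof.
move=> a u v; rewrite /lift_fun W_partP perp_partP.
under eq_bigr do rewrite dcoordP scalerDl -scalerA.
rewrite big_split /= -scaler_sumr !linearP /= !scalerDr.
by rewrite [X in X + _ = _]addrACA; apply: addrACA.
Qed.

Definition lift g h : 'End(E) := linfun (lift_fun g h).

Lemma liftE g h v : lift g h v = lift_fun g h v.
Proof. exact/linfun_linearE/lift_funP. Qed.

Lemma lift_W g h x : x \in W -> lift g h x = extW g x.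
Proof.
move=> Wx; have dcoord0 j : dcoord j x = 0 by rewrite dcoord_perp ?isotropic_perp.
rewrite liftE /lift_fun /W_part perp_partE ?isotropic_perp // piW // !linear0.
by rewrite !addr0 big1 ?addr0 // => j _; rewrite dcoord0 scale0r.
Qed.

Lemma lift_T g h a : lift g h (T a) = T (h a).
Proof.
rewrite liftE /lift_fun /W_part perp_partE ?T_perp // piT subrr linear0 add0r.
by rewrite big1 ?addr0 // => j _; rewrite dcoord_perp ?T_perp ?scale0r.
Qed.

Lemma lift_d g h j : lift g h (d j) = dual_image g j.
Proof.
rewrite liftE /lift_fun /W_part perp_part_d !(linear0, addr0, add0r).
by under eq_bigr do rewrite dcoord_d scaler_nat; rewrite sum_mulrb_eq.
Qed.

Lemma GLR_lker0 g : GLR g -> lker g == 0%VS.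
Proof. by case=> /bij_lker0. Qed.

Lemma GLR_inv g : GLR g -> GLR g^-1%VF.
Proof.
move=> GLRg; have g0 := GLR_lker0 GLRg.
split; first by exists g; [exact: lker0_lfunVK | exact: lker0_lfunK].
by move=> y; rewrite (GLRg.2 (g^-1%VF y)) lker0_lfunVK.
Qed.

Lemma extW1 : {in W, extW \1%VF =1 id}.
Proof. by move=> x Wx; rewrite extWE id_lfunE vsprojK. Qed.

Lemma extWK g : GLR g -> {in W, cancel (extW g) (extW g^-1%VF)}.
Proof. by move=> GLRg x Wx; rewrite extW_comp lker0_compVf ?extW1 // GLR_lker0. Qed.

Lemma extWVK g : GLR g -> {in W, cancel (extW g^-1%VF) (extW g)}.
Proof. by move=> GLRg x Wx; rewrite extW_comp lker0_compfV ?extW1 // GLR_lker0. Qed.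

Lemma extW_rad g x : GLR g -> x \in W -> rad x -> rad (extW g x).
Proof. by move=> GLRg Wx; rewrite extWE -(GLRg.2 (vsproj W x)) vsprojK. Qed.

(* [extW g] maps the radical to itself, so it is determined on [W] by its values on [w]. *)
Lemma omega_d_extW g j y : GLR g -> y \in W ->
  om (d j) (extW g y) = \sum_l om (d j) (extW g (w l)) * om (d l) y.
Proof.
move=> GLRg Wy; have := W_coord Wy; set r := y - _ => rad_r.
have rad_gr : rad (extW g r) by apply: extW_rad => //; apply: radW.
have -> : extW g y = extW g (r + \sum_l sigma (om (d l) y) *: w l) by rewrite subrK.
rewrite linearD linear_sum /=.
rewrite omegaDr rad_gr.1 add0r omega_sumr; apply: eq_bigr => l _.
by rewrite linearZ /= omegaZr sigmaK.
Qed.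

Lemma omega_dual_image g j x : GLR g -> x \in W ->
  om (dual_image g j) (extW g x) = om (d j) x.
Proof.
move=> GLRg Wx; rewrite -{2}(extWK GLRg Wx) (omega_d_extW _ (GLR_inv GLRg)) ?extW_W //.
by rewrite omega_suml; apply: eq_bigr => l _; rewrite omegaZl.
Qed.

Lemma omega_T a b : om (T a) (T b) = omF a b.
Proof.
case: quotW => _ _ _ null_pi.
by rewrite -(nullform_omega null_pi (T_perp b) (T_perp a)) /omega !piT.
Qed.

Lemma Q_T a : q (T a) (T a) - qF a a \in Lam.
Proof.
by case: quotW => _ _ _ [_ Q_pi]; have := LamN (Q_pi _ (T_perp a)); rewrite piT opprB.
Qed.

Local Notation D := (\sum_(l < k) <[d l]>)%VS.

Lemma isotropic_D : isotropic sigma eps Lam q D.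
Proof. exact: isotropic_span omega_d_d Q_d. Qed.

Lemma d_D j : d j \in D.
Proof. by rewrite memvE (sumv_sup j) // -memvE memv_line. Qed.

Lemma dual_image_D g j : dual_image g j \in D.
Proof. by rewrite rpred_sum // => l _; rewrite rpredZ ?d_D. Qed.

Lemma omega_T_D a x : x \in D -> om (T a) x = 0.
Proof.
move=> /memv_sumP [xs xs_d ->]; rewrite omega_sumr big1 // => l _.
by have /vlineP [c ->] := xs_d l isT; rewrite omegaZr omega_T_d mul0r.
Qed.

Lemma omega_ext_r (f : 'End(E)) x :
  (forall y, y \in W -> om (f x) (f y) = om x y) ->
  (forall a, om (f x) (f (T a)) = om x (T a)) ->
  (forall j, om (f x) (f (d j)) = om x (d j)) ->
  forall v, om (f x) (f v) = om x v.
Proof.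
move=> fW fT fd v; rewrite [in f v](decompE v) [in om x v](decompE v).
move: (W_part_W v); move: (W_part v) (perp_part v) => y z Wy.
rewrite !linearD linear_sum !omegaDr !omega_sumr fW // fT; congr (_ + _).
by apply: eq_bigr => j _; rewrite linearZ /= !omegaZr fd.
Qed.

Lemma omega_ext (f : 'End(E)) :
  (forall x, x \in W -> forall v, om (f x) (f v) = om x v) ->
  (forall a v, om (f (T a)) (f v) = om (T a) v) ->
  (forall j v, om (f (d j)) (f v) = om (d j) v) ->
  forall u v, om (f u) (f v) = om u v.
Proof.
move=> fW fT fd u v; rewrite [in f u](decompE u) [in om u v](decompE u).
move: (W_part_W u); move: (W_part u) (perp_part u) => x y Wx.
rewrite !linearD linear_sum !omegaDl !omega_suml fW // fT; congr (_ + _).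
by apply: eq_bigr => j _; rewrite linearZ /= !omegaZl fd.
Qed.

Lemma lift_omega g h : GLR g -> isomE sigma eps Lam qF h ->
  forall u v, om (lift g h u) (lift g h v) = om u v.
Proof.
move=> GLRg [_ null_h].
have h_omega a b : omF (h a) (h b) = omF a b by exact: nullform_omega null_h I I.
have omega_W_T x a : x \in W -> om x (T a) = 0 by move=> Wx; apply/omega_eq0_sym/omega_T_W.
apply: omega_ext.
- move=> x Wx; apply: omega_ext_r.
  + by move=> y Wy; rewrite !lift_W // !isoW.1 ?extW_W.
  + by move=> a; rewrite lift_W // lift_T !omega_W_T ?extW_W.
  + by move=> j; rewrite lift_W // lift_d omega_sym omega_dual_image // -omega_sym.
- move=> a; apply: omega_ext_r.
  + by move=> y Wy; rewrite lift_T lift_W // !omega_T_W ?extW_W.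
  + by move=> b; rewrite !lift_T !omega_T h_omega.
  + by move=> j; rewrite lift_T lift_d omega_T_D ?dual_image_D // omega_T_d.
- move=> j; apply: omega_ext_r.
  + by move=> y Wy; rewrite lift_d lift_W // omega_dual_image.
  + by move=> b; rewrite lift_T lift_d !(omega_eq0_sym (omega_T_D _ _)) ?d_D ?dual_image_D.
  + by move=> l; rewrite !lift_d !isotropic_D.1 ?d_D ?dual_image_D.
Qed.

Lemma lift_Q g h : GLR g -> isomE sigma eps Lam qF h ->
  forall v, q (lift g h v) (lift g h v) - q v v \in Lam.
Proof.
move=> GLRg isoh v; have lift_om := lift_omega GLRg isoh.
have h_Q a : qF (h a) (h a) - qF a a \in Lam by case: isoh => _ [_ h_Q]; apply: h_Q.
have Dv : \sum_j dcoord j v *: d j \in D by rewrite rpred_sum // => j _; rewrite rpredZ ?d_D.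
rewrite [in lift g h v](decompE v) [in q v v](decompE v).
move: (W_part_W v) Dv; move: (W_part v) (pi (perp_part v)) (\sum_j _) => x b y Wx Dy.
have Dly : lift g h y \in D.
  have /memv_sumP [ys ys_d ->] := Dy; rewrite linear_sum rpred_sum // => l _.
  by have /vlineP [c ->] := ys_d l isT; rewrite linearZ /= lift_d rpredZ ?dual_image_D.
rewrite linearD; apply: Q_add_congr; last exact: lift_om.
- rewrite linearD /= lift_W // lift_T; apply: Q_add_congr.
  + exact: LamB (isoW.2 _ (extW_W _ _)) (isoW.2 _ Wx).
  + by have := LamB (LamD (Q_T (h b)) (h_Q b)) (Q_T b); congr (_ \in Lam); ring.
  + by have := lift_om (T b) x; rewrite lift_T lift_W.
- exact: LamB (isotropic_D.2 _ Dly) (isotropic_D.2 _ Dy).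
Qed.

Lemma lift_comp g1 g2 h1 h2 : GLR g1 -> GLR g2 ->
  lift (g1 \o g2)%VF (h1 \o h2)%VF = (lift g1 h1 \o lift g2 h2)%VF.
Proof.
move=> GLRg1 GLRg2; apply: lfun_ext.
- by move=> x Wx; rewrite comp_lfunE !lift_W ?extW_W ?extW_comp.
- by move=> a; rewrite comp_lfunE !lift_T comp_lfunE.
move=> j; rewrite comp_lfunE !lift_d /dual_image linear_sum /=.
have omega_inv l : om (d j) (extW (g1 \o g2)^-1%VF (w l)) =
    \sum_m om (d j) (extW g2^-1%VF (w m)) * om (d m) (extW g1^-1%VF (w l)).
  rewrite lker0_invM ?GLR_lker0 // -extW_comp (omega_d_extW _ (GLR_inv GLRg2)) //.
  exact: extW_W.
under eq_bigr do rewrite omega_inv scaler_suml.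
rewrite exchange_big /=; apply: eq_bigr => m _.
by rewrite linearZ /= lift_d scaler_sumr; apply: eq_bigr => l _; rewrite scalerA.
Qed.

Lemma lift1 : lift \1%VF \1%VF = \1%VF.
Proof.
apply: lfun_ext.
- by move=> x Wx; rewrite lift_W // id_lfunE extW1.
- by move=> a; rewrite lift_T !id_lfunE.
move=> j; rewrite lift_d id_lfunE /dual_image.
have inv1 : (\1^-1 = \1 :> 'End(subvs_of W))%VF.
  by rewrite -[LHS]comp_lfun1r lker0_compVf //; apply/lker0P => x y; rewrite !id_lfunE.
under eq_bigr do rewrite inv1 extW1 ?w_in_W // omega_d_w scaler_nat.
exact: sum_mulrb_eq.
Qed.

Lemma lift_bij g h : GLR g -> bijective h -> bijective (lift g h).
Proof.
move=> GLRg /bij_lker0 h0; have g0 := GLR_lker0 GLRg.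
have GLRg' := GLR_inv GLRg.
exists (lift g^-1%VF h^-1%VF) => v; rewrite -comp_lfunE -lift_comp //.
  by rewrite !lker0_compVf // lift1 id_lfunE.
by rewrite !lker0_compfV // lift1 id_lfunE.
Qed.

Lemma lift_isom g h : GLR g -> isomE sigma eps Lam qF h -> isomE sigma eps Lam q (lift g h).
Proof.
move=> GLRg isoh; split; first exact: lift_bij isoh.1.
by apply: nullform_of_omega; [exact: lift_omega | exact: lift_Q].
Qed.

Lemma lift_img g h : GLR g -> (lift g h @: W = W)%VS.
Proof.
move=> GLRg; apply/vspaceP => x; apply/memv_imgP/idP => [[y Wy ->]|Wx].
  by rewrite lift_W ?extW_W.
by exists (extW g^-1%VF x); rewrite ?extW_W // lift_W ?extW_W // extWVK.
Qed.

Lemma lift_val g h (y : subvs_of W) : lift g h (vsval y) = vsval (g y).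
Proof. by rewrite lift_W ?subvsP // extW_val. Qed.

Lemma lift_quot g h v : v \in perp W -> pi (lift g h v) = h (pi v).
Proof.
move=> Wv; rewrite liftE /lift_fun big1 => [|j _]; last by rewrite dcoord_perp ?scale0r.
by rewrite addr0 linearD /= piW ?extW_W // add0r piT perp_partE.
Qed.

Lemma ATid_GLR W0 g : ATid sigma eps Lam q (W := W) W0 g -> GLR g.
Proof.
case=> bij_g _ g_fix; split=> // y; split=> [rad_y|rad_gy]; first by rewrite g_fix.
have gy : g y = y by apply: (bij_inj bij_g); rewrite g_fix.
by rewrite -gy.
Qed.

Lemma lift_sum_d g h (c : 'I_k -> K) :
  lift g h (\sum_j c j *: d j) = \sum_l om (\sum_j c j *: d j) (extW g^-1%VF (w l)) *: d l.
Proof.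
rewrite linear_sum; under eq_bigr do rewrite linearZ /= lift_d /dual_image scaler_sumr.
rewrite exchange_big /=; apply: eq_bigr => l _.
by rewrite omega_suml scaler_suml; apply: eq_bigr => j _; rewrite omegaZl scalerA.
Qed.

Lemma omega_sum_d_w (c : 'I_k -> K) l : om (\sum_j c j *: d j) (w l) = c l.
Proof.
rewrite omega_suml; under eq_bigr do rewrite omegaZl omega_d_w mulr_natr eq_sym.
exact: sum_mulrb_eq.
Qed.

(* A vector of [U] is a radical vector plus a combination of the [d j]; [g] fixes the
   radical and moves [W] only inside [U^perp], which [U] does not see. *)
Lemma lift_fix (U : {vspace E}) g h :
  (forall u, u \in U -> exists c : 'I_k -> K, rad (u - \sum_j c j *: d j)) ->
  ATid sigma eps Lam q (W := W) (W :&: perp U)%VS g ->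
  forall u, u \in U -> lift g h u = u.
Proof.
move=> U_d ATg u Uu; have [bij_g g_move g_fix] := ATg; have g0 := bij_lker0 bij_g.
have [c] := U_d u Uu; set r := u - _ => rad_r.
have Wr : r \in W := radW rad_r.
suff : lift g h (r + \sum_j c j *: d j) = r + \sum_j c j *: d j by rewrite /r subrK.
rewrite linearD /= lift_W // extWE g_fix ?vsprojK // lift_sum_d; congr (_ + _).
apply: eq_bigr => l _; congr (_ *: _); rewrite -[RHS](omega_sum_d_w c l).
have move_perp : w l - extW g^-1%VF (w l) \in perp U.
  have := g_move (g^-1%VF (vsproj W (w l))).
  by rewrite lker0_lfunVK // vsprojK ?w_in_W // -extWE => /memv_capP [].
rewrite -[w l in RHS](subrK (extW g^-1%VF (w l))) omegaDr.
rewrite (_ : om _ (w l - _) = 0) ?add0r //.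
have -> : \sum_j c j *: d j = u - r by rewrite /r opprB addrC subrK.
rewrite omegaBl (omega_eq0_sym (rad_r.1 _)) subr0.
by apply/omega_eq0_sym; move/orthvP: move_perp; apply.
Qed.

Lemma lift_split_stabilizer :
  exists s, split_section sigma eps Lam q qF pi
    (fun f => isomE sigma eps Lam q f /\ (f @: W = W)%VS) GLR s.
Proof.
exists (fun p => lift p.1 p.2); split=> [g h GLRg isoh | g1 h1 g2 h2 GLRg1 _ GLRg2 _] /=.
  by split; [split; [exact: lift_isom | exact: lift_img] | exact: lift_val | exact: lift_quot].
exact: lift_comp.
Qed.

Lemma lift_split_relative (U : {vspace E}) :
  (forall u, u \in U -> exists c : 'I_k -> K, rad (u - \sum_j c j *: d j)) ->
  exists s, split_section sigma eps Lam q qF pi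
    (fun f => [/\ isomE sigma eps Lam q f, (forall u, u \in U -> f u = u) & (f @: W = W)%VS])
    (ATid sigma eps Lam q (W := W) (W :&: perp U)%VS) s.
Proof.
move=> U_d; exists (fun p => lift p.1 p.2).
split=> [g h ATg isoh | g1 h1 g2 h2 ATg1 _ ATg2 _] /=; last first.
  by apply: lift_comp; apply: ATid_GLR; [exact: ATg1 | exact: ATg2].
have GLRg := ATid_GLR ATg; split; last exact: lift_quot.
  by split; [exact: lift_isom | exact: lift_fix | exact: lift_img].
exact: lift_val.
Qed.

End Lift.

Section IsotropicCorrection.
Variables (W : {vspace E}) (k m : nat) (w e : 'I_k -> E).
Hypotheses (isoW : isotropic sigma eps Lam q W) (w_W : forall i, w i \in W).
Hypothesis e_dual : forall i j, om (e j) (w i) = (i == j)%:R.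
Hypothesis e_omega : forall i j : 'I_k, (i < m)%N -> (j < m)%N -> om (e i) (e j) = 0.
Hypothesis e_Q : forall i : 'I_k, (i < m)%N -> q (e i) (e i) \in Lam.

(* Adding [correction j i *: w j] to [e i] kills [omega (e i) (e j)] for [j < i] and makes
   [e i] singular for [j = i], without changing the pairing with [w]. *)
Definition correction (j i : 'I_k) : K :=
  if (j < i)%N then - (sigma eps * om (e i) (e j))
  else if j == i then (if q (e i) (e i) \in Lam then 0 else - (sigma eps * q (e i) (e i)))
  else 0.

Definition corrected i := e i + \sum_j correction j i *: w j.

Lemma correction_W i : \sum_j correction j i *: w j \in W.
Proof. by rewrite rpred_sum // => j _; rewrite rpredZ. Qed.

Lemma omega_e_correction i j : om (e i) (\sum_l correction l j *: w l) = sigma (correction i j).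
Proof.
rewrite omega_sumr; under eq_bigr do rewrite omegaZr e_dual mulr_natl.
exact: sum_mulrb_eq.
Qed.

Lemma omega_correction_e i j : om (\sum_l correction l i *: w l) (e j) = correction j i * eps.
Proof.
rewrite omega_suml; under eq_bigr do rewrite omegaZl omega_sym e_dual rmorph_nat mulrA mulr_natr.
exact: sum_mulrb_eq.
Qed.

Lemma corrected_dual i j : om (corrected j) (w i) = (i == j)%:R.
Proof. by rewrite omegaDl e_dual isoW.1 ?correction_W ?addr0. Qed.

Lemma omega_corrected i j :
  om (corrected i) (corrected j) = om (e i) (e j) + sigma (correction i j) + correction j i * eps.
Proof.
rewrite omegaDl !omegaDr omega_e_correction omega_correction_e.
by rewrite (isoW.1 _ _ (correction_W i) (correction_W j)) addr0.
Qed.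

Lemma corrected_Q i : q (corrected i) (corrected i) \in Lam.
Proof.
have cii : correction i i =
    if q (e i) (e i) \in Lam then 0 else - (sigma eps * q (e i) (e i)).
  by rewrite /correction ltnn eqxx.
have := Q_addE (e i) (\sum_j correction j i *: w j).
rewrite omega_correction_e cii -/(corrected i).
have Q_corr := isoW.2 _ (correction_W i); set x := q (e i) (e i).
case: ifP => [Qe /(LamD Qe)|_] /(LamD Q_corr); congr (_ \in Lam); first by ring.
by rewrite mulNr -mulrA [x * eps]mulrC mulrA sigma_eps; ring.
Qed.

Lemma omega_corrected_eq0 i j : om (corrected i) (corrected j) = 0.
Proof.
case: (ltngtP i j) => [ij|ji|/val_inj <-]; last by rewrite omega_diag_eq0 ?corrected_Q.
- have ji : (j == i) = false by rewrite -val_eqE /= gtn_eqF.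
  rewrite omega_corrected /correction ij ltnNge (ltnW ij) /= ji mul0r addr0.
  by rewrite rmorphN rmorphM sigmaK -omega_sym subrr.
- have ij : (i == j) = false by rewrite -val_eqE /= gtn_eqF.
  rewrite omega_corrected /correction ji ltnNge (ltnW ji) /= ij rmorph0 addr0.
  by rewrite mulNr mulrAC sigma_eps mul1r subrr.
Qed.

Lemma corrected_prefix (j : 'I_k) : (j < m)%N -> corrected j = e j.
Proof.
move=> jm; rewrite /corrected big1 ?addr0 // => l _; rewrite /correction.
case: ifP => [lj|_]; first by rewrite e_omega ?mulr0 ?oppr0 ?scale0r // (ltn_trans lj).
by case: eqP => [->|]; rewrite ?e_Q ?scale0r.
Qed.

End IsotropicCorrection.

Lemma exists_isotropic_dual (W : {vspace E}) k m (w e : 'I_k -> E) :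
  isotropic sigma eps Lam q W -> (forall i, w i \in W) ->
  (forall i j, om (e j) (w i) = (i == j)%:R) ->
  (forall i j : 'I_k, (i < m)%N -> (j < m)%N -> om (e i) (e j) = 0) ->
  (forall i : 'I_k, (i < m)%N -> q (e i) (e i) \in Lam) ->
  exists d, isotropic_dual w d /\ forall j : 'I_k, (j < m)%N -> d j = e j.
Proof.
move=> isoW w_W e_dual e_omega e_Q.
exists (corrected w e); split; last by move=> j; apply: corrected_prefix.
split; [exact: corrected_dual isoW w_W e_dual | exact: omega_corrected_eq0 isoW w_W e_dual |].
exact: corrected_Q isoW w_W e_dual.
Qed.

Lemma exists_orth_section (W : {vspace E}) (F : vectType K) (qF : F -> F -> K)
    (pi : 'Hom(E, F)) k (w d : 'I_k -> E) :
  is_quotient sigma eps Lam q W qF pi -> isotropic sigma eps Lam q W ->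
  (forall i, w i \in W) -> (forall i j, om (d j) (w i) = (i == j)%:R) ->
  exists T, orth_section W pi d T.
Proof.
move=> [_ pi_onto capW _] isoW w_W d_dual.
pose p : 'Hom(subvs_of (perp W), F) := (pi \o linfun vsval)%VF.
pose T0 : 'Hom(F, E) := (linfun vsval \o p^-1)%VF.
have T0_perp f : T0 f \in perp W by rewrite comp_lfunE lfunE /= subvsP.
have piT0 f : pi (T0 f) = f.
  have : f \in limg p.
    have : f \in (pi @: perp W)%VS by rewrite pi_onto memvf.
    case/memv_imgP => v Wv ->; rewrite (_ : pi v = p (vsproj (perp W) v)) ?memv_img ?memvf //.
    by rewrite comp_lfunE lfunE /= vsprojK.
  by move/limg_lfunVK; rewrite comp_lfunE lfunE /= => pT0f; rewrite comp_lfunE lfunE.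
have piW x : x \in W -> pi x = 0.
  by rewrite -capW => /memv_capP [_]; rewrite memv_ker => /eqP.
(* Subtracting a combination of the [w l] makes [T0 f] orthogonal to every [d j]. *)
pose Tf f := T0 f - \sum_l (om (T0 f) (d l) * sigma eps) *: w l.
have Tf_lin : linear Tf.
  move=> a f1 f2; rewrite /Tf linearP /=.
  under eq_bigr do rewrite omegaDl omegaZl mulrDl scalerDl -mulrA -scalerA.
  by rewrite big_split /= -scaler_sumr scalerBr opprD addrACA.
exists (linfun Tf); split=> [f|f|f j]; rewrite linfun_linearE // /Tf.
- by rewrite rpredB ?T0_perp // rpred_sum // => l _; rewrite rpredZ ?isotropic_perp.
- rewrite linearB linear_sum /= piT0 big1 ?subr0 // => l _.
  by rewrite linearZ /= piW ?scaler0.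
rewrite omegaBl omega_suml.
under eq_bigr do rewrite omegaZl [om (w _) _]omega_sym d_dual rmorph_nat mulrA
  -[_ * sigma eps * eps]mulrA sigma_eps mulr1 mulr_natr.
by rewrite sum_mulrb_eq subrr.
Qed.

Section HyperbolicFrame.
Variables (W U : {vspace E}).
Hypotheses (isoW : isotropic sigma eps Lam q W) (radW : forall v, rad v -> v \in W).
Hypotheses (isoU : isotropic sigma eps Lam q U) (WU_full : (W + perp U = fullv)%VS).

Local Notation R := (W :&: perp fullv)%VS.

Lemma memR x : x \in R <-> rad x.
Proof.
split=> [/memv_capP [Wx /orthvP x_perp]|rad_x].
  by split; [move=> u; apply/omega_eq0_sym/x_perp/memvf | exact: isoW.2].
by rewrite memv_cap radW //=; apply/orthvP => u _; apply/omega_eq0_sym/rad_x.1.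
Qed.

Lemma rad_complement_split (X : {vspace E}) x :
  x \in X -> exists2 x1, x1 \in (X :\: R)%VS & rad (x - x1).
Proof.
rewrite -{1}(addv_diff_cap X R) => /memv_addP [x1 X'x1 [r /memv_capP [_ Rr] ->]].
by exists x1; rewrite // addrC addKr; apply/memR.
Qed.

Lemma rad_complement_eq0 (X : {vspace E}) y : y \in (X :\: R)%VS -> rad y -> y = 0.
Proof.
by move=> X'y /memR Ry; apply/eqP; rewrite -memv0 -(capv_diff X R) memv_cap X'y.
Qed.

Local Notation U' := (U :\: R)%VS.
Local Notation m := (\dim U').
Local Notation ub := (vbasis U').

Lemma ub_U' (i : 'I_m) : ub`_i \in U'.
Proof. by rewrite vbasis_mem // mem_nth ?size_tuple. Qed.

Lemma ub_U (i : 'I_m) : ub`_i \in U.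
Proof. exact: subvP (diffvSl U R) _ (ub_U' i). Qed.

Lemma ub_omega_free (c : 'I_m -> K) :
  (forall v, om v (\sum_i c i *: ub`_i) = 0) -> forall i, c i = 0.
Proof.
move=> c_perp; apply/freeP; first exact: basis_free (vbasisP U').
apply: (rad_complement_eq0 (X := U)).
  by rewrite rpred_sum // => i _; rewrite rpredZ ?ub_U'.
by split=> //; apply: isoU.2; rewrite rpred_sum // => i _; rewrite rpredZ ?ub_U.
Qed.

(* Pair [ub] with vectors of [E] via nondegeneracy, then project them to [W] along [U^perp]. *)
Lemma exists_W_dual :
  exists w1 : 'I_m -> E,
    forall a, w1 a \in W /\ forall i : 'I_m, om (ub`_i) (w1 a) = (i == a)%:R.
Proof.
suff /fin_all_exists : forall a : 'I_m,
  exists x, x \in W /\ forall i : 'I_m, om (ub`_i) x = (i == a)%:R by [].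
move=> a; have [v v_ub] := exists_omega_dual ub_omega_free (fun i => eps * (i == a)%:R).
have : v \in (W + perp U)%VS by rewrite WU_full memvf.
case/memv_addP => x Wx [y /orthvP y_perp v_xy]; exists x; split=> // i.
have := v_ub i; rewrite v_xy omegaDl y_perp ?ub_U // addr0 => x_ub.
by rewrite omega_sym x_ub rmorphM rmorph_nat mulrA eps_sigma mul1r.
Qed.

Local Notation W1' := ((W :&: perp U) :\: R)%VS.
Local Notation wb := (vbasis W1').
Local Notation n := (\dim W1').

Section Completion.
Variable w1 : 'I_m -> E.
Hypothesis w1_W : forall a, w1 a \in W.
Hypothesis ub_w1 : forall a i : 'I_m, om (ub`_i) (w1 a) = (i == a)%:R.

Lemma wb_W1' (b : 'I_n) : wb`_b \in W1'.
Proof. by rewrite vbasis_mem // mem_nth ?size_tuple. Qed.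

Lemma wb_W (b : 'I_n) : wb`_b \in W.
Proof. by have /memv_capP [] := subvP (diffvSl _ R) _ (wb_W1' b). Qed.

Lemma wb_perp (b : 'I_n) : wb`_b \in perp U.
Proof. by have /memv_capP [] := subvP (diffvSl _ R) _ (wb_W1' b). Qed.

Local Notation w := (catf w1 (fun b : 'I_n => wb`_b)).

Lemma w_W i : w i \in W.
Proof.
by rewrite -[i]splitK; case: (fintype.split i) => [a|b] /=; rewrite ?catf_l ?catf_r ?w1_W ?wb_W.
Qed.

Lemma omega_ub_w (a : 'I_m) i : om (ub`_a) (w i) = (lshift n a == i)%:R.
Proof.
rewrite -[i]splitK; case: (fintype.split i) => [a'|b] /=; first by rewrite catf_l ub_w1 eq_lshift.
by rewrite catf_r eq_lrshift; apply/omega_eq0_sym; move/orthvP: (wb_perp b); apply; apply: ub_U.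
Qed.

Lemma w_spans : spans_mod_rad W w.
Proof.
split=> [|x Wx]; first exact: w_W.
pose c1 (a : 'I_m) := om x (ub`_a) * sigma eps; pose x1 := x - \sum_a c1 a *: w1 a.
have x1_ub (a : 'I_m) : om x1 (ub`_a) = 0.
  rewrite omegaBl omega_suml; under eq_bigr do rewrite omegaZl omega_sym ub_w1.
  under eq_bigr do rewrite rmorph_nat mulrA mulr_natr eq_sym.
  by rewrite sum_mulrb_eq /c1 -mulrA sigma_eps mulr1 subrr.
have x1_perp : x1 \in perp U.
  apply/orthvP => u Uu; have [u1 U'u1 rad_u] := rad_complement_split Uu.
  rewrite -[u](subrK u1) omegaDr rad_u.1 add0r (coord_vbasis U'u1) omega_sumr big1 // => a _.
  by rewrite omegaZr x1_ub mul0r.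
have W1x1 : x1 \in (W :&: perp U)%VS.
  by rewrite memv_cap x1_perp rpredB // rpred_sum // => a _; rewrite rpredZ.
have [x2 W1'x2 rad_r2] := rad_complement_split W1x1.
exists (catf c1 (fun b => coord wb b x2)); rewrite sum_catf -(coord_vbasis W1'x2).
by rewrite opprD addrA -/x1.
Qed.

Lemma w_omega_free (c : 'I_(m + n) -> K) :
  (forall v, om v (\sum_i c i *: w i) = 0) -> forall i, c i = 0.
Proof.
move=> c_perp.
have c_l a : c (lshift n a) = 0.
  have := c_perp (ub`_a); rewrite omega_sumr.
  under eq_bigr do rewrite omegaZr omega_ub_w mulr_natl eq_sym.
  by rewrite sum_mulrb_eq => /(congr1 sigma); rewrite sigmaK rmorph0.
have c_wb : \sum_i c i *: w i = \sum_b c (rshift m b) *: wb`_b.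
  rewrite big_split_ord /= big1 ?add0r => [|a _]; last by rewrite catf_l c_l scale0r.
  by apply: eq_bigr => b _; rewrite catf_r.
have sum0 : \sum_b c (rshift m b) *: wb`_b = 0.
  apply: (rad_complement_eq0 (X := (W :&: perp U)%VS)).
    by rewrite rpred_sum // => b _; rewrite rpredZ ?wb_W1'.
  by rewrite -c_wb; split=> //; apply: isoW.2; rewrite rpred_sum // => i _; rewrite rpredZ ?w_W.
move=> i; rewrite -[i]splitK; case: (fintype.split i) => [a|b] /=; first exact: c_l.
by move: b; apply/freeP: sum0; apply: basis_free (vbasisP _).
Qed.

Lemma lshiftP (i : 'I_(m + n)) : (i < m)%N -> exists a, i = lshift n a.
Proof. by move=> im; exists (Ordinal im); apply: val_inj. Qed.

(* The [ub] are completed to a family dual to [w], which is then corrected to an isotropic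
   one; the correction does not touch the [ub], which already span an isotropic space. *)
Lemma exists_frame_d : exists d, isotropic_dual w d /\ forall a, d (lshift n a) = ub`_a.
Proof.
have /fin_all_exists [e e_dual] j : exists e, forall i, om e (w i) = (i == j)%:R.
  exact: exists_omega_dual w_omega_free _.
pose e' := catf (fun a : 'I_m => ub`_a) (fun b => e (rshift m b)).
have e'_dual i j : om (e' j) (w i) = (i == j)%:R.
  rewrite -[j]splitK; case: (fintype.split j) => [a|b] /=.
    by rewrite /e' catf_l omega_ub_w eq_sym.
  by rewrite /e' catf_r e_dual.
have [||d [d_dual d_e']] := exists_isotropic_dual isoW w_W e'_dual (m := m).
- by move=> i j /lshiftP [a ->] /lshiftP [b ->]; rewrite /e' !catf_l isoU.1 ?ub_U.
- by move=> i /lshiftP [a ->]; rewrite /e' catf_l isoU.2 ?ub_U.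
exists d; split=> // a; rewrite d_e'; first by rewrite /e' catf_l.
exact: ltn_ord a.
Qed.

End Completion.

Lemma exists_hyperbolic_frame :
  exists k (w d : 'I_k -> E), [/\ spans_mod_rad W w, isotropic_dual w d &
    forall u, u \in U -> exists c : 'I_k -> K, rad (u - \sum_j c j *: d j)].
Proof.
have [w1 w1_W_dual] := exists_W_dual.
have w1_W a := (w1_W_dual a).1; have ub_w1 a := (w1_W_dual a).2.
have [d [d_dual d_ub]] := exists_frame_d w1_W ub_w1.
exists _, (catf w1 (fun b : 'I_n => wb`_b)), d.
split=> [||u Uu]; [exact: w_spans | exact: d_dual |].
have [u1 U'u1 rad_u] := rad_complement_split Uu.
exists (catf (fun a => coord ub a u1) (fun _ => 0)); rewrite big_split_ord /=.
rewrite [X in _ - (_ + X)]big1 ?addr0 => [|b _]; last by rewrite catf_r scale0r.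
by under eq_bigr do rewrite catf_l d_ub; rewrite -(coord_vbasis U'u1).
Qed.

End HyperbolicFrame.

Lemma split_stabilizer (W : {vspace E}) : Pomega sigma eps Lam q W ->
  forall (F : vectType K) (qF : F -> F -> K) (pi : 'Hom(E, F)),
    is_quotient sigma eps Lam q W qF pi ->
    exists s, split_section sigma eps Lam q qF pi
      (fun f => isomE sigma eps Lam q f /\ (f @: W = W)%VS) (GLR sigma eps Lam q (W := W)) s.
Proof.
move=> [isoW radW _ _] F qF pi quotW; set R := (W :&: perp fullv)%VS.
have isoR : isotropic sigma eps Lam q R by apply: isotropicS isoW; apply: capvSl.
have WR_full : (W + perp R = fullv)%VS.
  apply/vspaceP => v; rewrite memvf; apply: (subvP (addvSr W _)).
  by apply/orthvP => r /memv_capP [_ /orthvP r_perp]; apply/omega_eq0_sym/r_perp/memvf.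
have [k [w [d [w_span d_dual _]]]] := exists_hyperbolic_frame isoW radW isoR WR_full.
have [d_w _ _] := d_dual; have [T T_sec] := exists_orth_section quotW isoW w_span.1 d_w.
exact (lift_split_stabilizer quotW isoW radW w_span d_dual T_sec).
Qed.

Lemma split_relative_stabilizer (U W : {vspace E}) :
  Pomega sigma eps Lam q U -> PomegaU sigma eps Lam q U W ->
  forall (F : vectType K) (qF : F -> F -> K) (pi : 'Hom(E, F)),
    is_quotient sigma eps Lam q W qF pi ->
    exists s, split_section sigma eps Lam q qF pi
      (fun f => [/\ isomE sigma eps Lam q f, (forall u, u \in U -> f u = u) & (f @: W = W)%VS])
      (ATid sigma eps Lam q (W := W) (W :&: perp U)%VS) s.
Proof.
move=> [isoU _ _ _] [[isoW radW _ _] WU_full] F qF pi quotW.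
have [k [w [d [w_span d_dual U_d]]]] := exists_hyperbolic_frame isoW radW isoU WU_full.
have [d_w _ _] := d_dual; have [T T_sec] := exists_orth_section quotW isoW w_span.1 d_w.
exact (lift_split_relative quotW isoW radW w_span d_dual T_sec U_d).
Qed.

End FormParameter.

Theorem proposition5p5 (K : fieldType) (sigma : {rmorphism K -> K}) (eps : K)
    (Lam : {pred K}) (E : vectType K) (q : E -> E -> K) :
  form_param sigma eps Lam -> sesq sigma q ->
  (* (1) *)
  (forall W : {vspace E}, Pomega sigma eps Lam q W ->
   forall (F : vectType K) (qF : F -> F -> K) (pi : 'Hom(E, F)),
     is_quotient sigma eps Lam q W qF pi ->
     exists s, split_section sigma eps Lam q qF pi
       (fun f => isomE sigma eps Lam q f /\ (f @: W = W)%VS)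
       (GLR sigma eps Lam q (W:=W)) s) /\
  (* (2) *)
  (forall U W : {vspace E}, Pomega sigma eps Lam q U ->
   PomegaU sigma eps Lam q U W ->
   forall (F : vectType K) (qF : F -> F -> K) (pi : 'Hom(E, F)),
     is_quotient sigma eps Lam q W qF pi ->
     exists s, split_section sigma eps Lam q qF pi
       (fun f => [/\ isomE sigma eps Lam q f,
                     (forall u, u \in U -> f u = u) & (f @: W = W)%VS])
       (ATid sigma eps Lam q (W:=W) (W :&: orthv sigma eps q U)%VS) s).
Proof.
move=> fp sesq_q; split.
  exact (split_stabilizer fp sesq_q).
exact (split_relative_stabilizer fp sesq_q).
Qed.
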